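(* Let $\mathbf{K}_{\mathbf{x}\mathbf{x}}\in\mathbb{R}^{K\times K}$ be a (symmetric positive semidefinite) covariance matrix. For any $d>0$ and any full-rank $\mathbf{A}\in\mathbb{Z}^{K\times K}$ with rows $\mathbf{a}_1^T,\ldots,\mathbf{a}_K^T$, $$\frac{1}{2}\log_2\Big(\max_{k=1,\ldots,K}\mathbf{a}_k^T\big(\mathbf{I}+\tfrac1d\mathbf{K}_{\mathbf{x}\mathbf{x}}\big)\mathbf{a}_k\Big)\ \ge\ \frac{1}{2K}\log_2\Big|\det\big(\mathbf{I}+\tfrac1d\mathbf{K}_{\mathbf{x}\mathbf{x}}\big)\Big|.$$ In particular, $R_{\text{IF}}(d)\ge R^{\text{BT}}_{\text{bench}}(d)$, where $R_{\text{IF}}(d)$ is the minimum of the left-hand side over full-rank integer $\mathbf{A}$ and $R^{\text{BT}}_{\text{bench}}(d)$ is the right-hand side. *)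

From HB Require Import structures.
From mathcomp Require Import all_boot all_order all_algebra.
From mathcomp Require Import reals exp.
Set Implicit Arguments. Unset Strict Implicit. Unset Printing Implicit Defensive.
Import Order.TTheory GRing.Theory Num.Theory.
Local Open Scope ring_scope.

Definition log2 {R : realType} (x : R) : R := ln x / ln 2.

Definition psd {R : realType} (K : nat) (M : 'M[R]_K) : Prop :=
  M^T = M /\ forall v : 'rV[R]_K, 0 <= (v *m M *m v^T) 0 0.

Definition intmx {R : realType} (K : nat) (A : 'M[int]_K) : 'M[R]_K :=
  map_mx (fun z : int => z%:~R) A.

Definition quadrow {R : realType} (K : nat) (A : 'M[int]_K) (M : 'M[R]_K)
  (k : 'I_K) : R :=
  (row k (intmx A) *m M *m (row k (intmx A))^T) 0 0.

(* Put M := I + Kxx/d, which is positive definite, and B := A viewed over R.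
   The Gram matrix G := B M B^T is positive definite with diagonal entries
   a_k^T M a_k, so Hadamard's inequality gives det G <= (max_k a_k^T M a_k)^K.
   Since B is a nonsingular integer matrix, (det B)^2 >= 1, hence
   det M <= (det B)^2 det M = det G; taking logarithms yields the claim. *)
Set Warnings "-notation-overridden,-ambiguous-paths,-notation-incompatible-prefix".
From HB Require Import structures.
From mathcomp Require Import all_boot all_order all_algebra.
From mathcomp Require Import reals exp.
From mathcomp Require Import ring.
Set Implicit Arguments. Unset Strict Implicit. Unset Printing Implicit Defensive.
Import Order.TTheory GRing.Theory Num.Theory.
Local Open Scope ring_scope.

Definition posdef (F : numDomainType) n (M : 'M[F]_n) : Prop :=
  M^T = M /\ forall v : 'rV_n, v != 0 -> 0 < (v *m M *m v^T) 0 0.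

Lemma delta_form (F : comNzRingType) n (M : 'M[F]_n) (i : 'I_n) :
  (delta_mx (0 : 'I_1) i *m M *m (delta_mx (0 : 'I_1) i)^T) 0 0 = M i i.
Proof. by rewrite trmx_delta -rowE -colE !mxE. Qed.

Lemma delta_mx_neq0 (F : nzRingType) m n (i : 'I_m) (j : 'I_n) :
  delta_mx i j != 0 :> 'M[F]_(m, n).
Proof.
by apply/negP => /eqP/matrixP/(_ i j); rewrite !mxE !eqxx /= => /eqP; rewrite oner_eq0.
Qed.

Lemma posdef_diag_gt0 (F : numDomainType) n (M : 'M[F]_n) (i : 'I_n) :
  posdef M -> 0 < M i i.
Proof. by case=> _ pdM; rewrite -delta_form pdM ?delta_mx_neq0. Qed.

Lemma mul_trmx_gt0 (F : realDomainType) n (w : 'rV[F]_n) :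
  w != 0 -> 0 < (w *m w^T) 0 0.
Proof.
move=> wn0; have [j wj] : exists j, w 0 j != 0.
  apply/existsP; apply: contraR wn0 => /existsPn w0.
  by apply/eqP/matrixP => i j; rewrite ord1 mxE; apply/eqP/negPn.
have sq_ge0 i : 0 <= w 0 i * w^T i 0 by rewrite mxE -expr2 sqr_ge0.
rewrite mxE lt_def sumr_ge0 // andbT psumr_neq0 //.
by apply/hasP; exists j; rewrite ?mem_index_enum //= mxE -expr2 exprn_even_gt0.
Qed.

Lemma posdef_add1_psd (R : realType) n (Kxx : 'M[R]_n) (c : R) :
  psd Kxx -> 0 <= c -> posdef (1%:M + c *: Kxx).
Proof.
move=> [Ksym Kpsd] c_ge0; split; first by rewrite linearD /= linearZ /= trmx1 Ksym.
move=> w wn0; rewrite mulmxDr mulmx1 mulmxDl mxE -scalemxAr -scalemxAl.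
by rewrite ltr_wpDr ?mul_trmx_gt0 // mxE mulr_ge0.
Qed.

Lemma posdef_congr (F : numFieldType) n (B M : 'M[F]_n) :
  B \in unitmx -> posdef M -> posdef (B *m M *m B^T).
Proof.
move=> Bunit [Msym pdM]; split; first by rewrite !trmx_mul trmxK Msym mulmxA.
move=> v vn0; have -> : v *m (B *m M *m B^T) *m v^T = v *m B *m M *m (v *m B)^T.
  by rewrite trmx_mul !mulmxA.
apply: pdM; apply: contra vn0 => /eqP vB0.
by rewrite -(mulmxK Bunit v) vB0 mul0mx.
Qed.

Section SchurComplement.

Variables (F : realFieldType) (n : nat) (G : 'M[F]_(1 + n)).
Hypothesis pdG : posdef G.

Let a := G (lshift n 0) (lshift n 0).
Let b := ursubmx G.

Definition schur := drsubmx G - a^-1 *: (b^T *m b).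

Let a_gt0 : 0 < a. Proof. exact: posdef_diag_gt0. Qed.

Let Gsym x y : G x y = G y x.
Proof. by case: pdG => /matrixP/(_ y x); rewrite mxE. Qed.

Let U : 'M[F]_(1 + n) := block_mx 1%:M (- a^-1 *: b) 0 1%:M.

(* One step of symmetric Gaussian elimination. *)
Let schur_block : U^T *m G *m U = block_mx a%:M 0 0 schur.
Proof.
have ul : ulsubmx G = a%:M by rewrite [LHS]mx11_scalar !mxE.
have dl : dlsubmx G = b^T by apply/matrixP => i j; rewrite !mxE Gsym ord1.
have an0 : a != 0 by rewrite gt_eqF.
rewrite -[G]submxK ul dl /U tr_block_mx !mulmx_block -/b.
rewrite ?trmx1 ?trmx0 ?mul1mx ?mul0mx ?mulmx1 ?mulmx0 ?addr0 ?add0r.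
have -> : a%:M *m (- a^-1 *: b) + b = 0.
  by rewrite mul_scalar_mx scalerA mulrN mulfV // scaleN1r addNr.
have -> : (- a^-1 *: b)^T *m a%:M + b^T = 0.
  by rewrite mul_mx_scalar linearZ /= scalerA mulrN mulfV // scaleN1r addNr.
by rewrite mul0mx add0r linearZ /= -scalemxAl scaleNr addrC.
Qed.

Lemma det_schur : \det G = a * \det schur.
Proof.
have := congr1 determinant schur_block.
rewrite !det_mulmx det_tr det_ublock !det1 mulr1 mulr1 mul1r det_ublock.
by rewrite det_scalar1.
Qed.

Lemma posdef_schur : posdef schur.
Proof.
have [_ pdG'] := pdG.
have Csym : (drsubmx G)^T = drsubmx G by apply/matrixP => i j; rewrite !mxE Gsym.
split; first by rewrite linearB /= linearZ /= trmx_mul trmxK Csym.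
move=> w wn0; pose v := row_mx 0 w *m U^T.
have vn0 : v != 0.
  apply: contra wn0 => /eqP; rewrite /v /U tr_block_mx mul_row_block.
  rewrite -[0 : 'rV_(1 + n)]hsubmxK => /eq_row_mx [_].
  by rewrite trmx1 mulmx1 mul0mx add0r => ->; rewrite linear0.
have := pdG' v vn0.
rewrite /v trmx_mul trmxK !mulmxA -(mulmxA _ U^T) -(mulmxA _ (U^T *m G)).
rewrite schur_block mul_row_block tr_row_mx mul_row_col.
by rewrite !mulmx0 !mul0mx !add0r trmx0 mulmx0 add0r.
Qed.

Lemma schur_diag_le i : schur i i <= G (rshift 1 i) (rshift 1 i).
Proof.
rewrite !mxE big_ord1 !mxE gerBl mulr_ge0 ?invr_ge0 ?(ltW a_gt0) //.
by rewrite -expr2 sqr_ge0.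
Qed.

End SchurComplement.

Lemma det_posdef_gt0 (F : realFieldType) n (G : 'M[F]_n) :
  posdef G -> 0 < \det G.
Proof.
elim: n G => [|n IH] G pdG; first by rewrite det_mx00 ltr01.
move: G pdG; rewrite -[n.+1]/(1 + n)%N => G pdG.
rewrite det_schur //; apply: mulr_gt0; first exact: posdef_diag_gt0.
exact/IH/posdef_schur.
Qed.

Lemma hadamard (F : realFieldType) n (G : 'M[F]_n) :
  posdef G -> \det G <= \prod_i G i i.
Proof.
elim: n G => [|n IH] G pdG; first by rewrite det_mx00 big_ord0.
move: G pdG; rewrite -[n.+1]/(1 + n)%N => G pdG.
rewrite det_schur // big_split_ord big_ord1 ler_pM2l ?posdef_diag_gt0 //.
have pdS := posdef_schur pdG.
apply: le_trans (IH _ pdS) _; apply: ler_prod => i _.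
by rewrite ltW ?posdef_diag_gt0 ?schur_diag_le.
Qed.

Lemma det_le_max_diagX (F : realFieldType) n (G : 'M[F]_n) :
  posdef G -> \det G <= (\big[Num.max/0]_i G i i) ^+ n.
Proof.
move=> pdG; apply: le_trans (hadamard pdG) _.
rewrite -[n in _ ^+ n]card_ord -prodr_const; apply: ler_prod => i _.
by rewrite ltW ?posdef_diag_gt0 //= (bigD1 i) //= le_max lexx.
Qed.

Lemma quadrow_gram (R : realType) n (A : 'M[int]_n) (M : 'M[R]_n) i :
  quadrow A M i = (intmx A *m M *m (intmx A)^T) i i.
Proof. by rewrite -delta_form /quadrow rowE trmx_mul !mulmxA. Qed.

Lemma det_intmx_sqr_ge1 (R : realType) n (A : 'M[int]_n) :
  \det A != 0 -> 1 <= \det (intmx A : 'M[R]_n) ^+ 2.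
Proof.
have -> : \det (intmx A : 'M[R]_n) = (\det A)%:~R by rewrite /intmx -det_map_mx.
by move=> detA; rewrite sqr_intr_ge1 ?intr_int ?intr_eq0.
Qed.

Lemma log2_le_mulr (R : realType) n (x m : R) :
  0 < x -> 0 < m -> x <= m ^+ n -> log2 x <= n%:R * log2 m.
Proof.
move=> x_gt0 m_gt0 le_xm; rewrite /log2 mulrA ler_pM2r ?invr_gt0 ?ln_gt0 ?ltr1n //.
by rewrite mulr_natl -lnXn // ler_ln ?posrE ?exprn_gt0.
Qed.

Theorem lemma2 (R : realType) (K : nat) (Kxx : 'M[R]_K) (d : R)
  (A : 'M[int]_K) :
  (0 < K)%N -> psd Kxx -> 0 < d -> \det A != 0 ->
  (1 / 2) * log2 (\big[Num.max/0]_(k < K)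
                    quadrow A (1%:M + d^-1 *: Kxx) k)
  >= (1 / (2 * K%:R)) * log2 `|\det (1%:M + d^-1 *: Kxx)|.
Proof.
move=> K_gt0 psdK d_gt0 detA.
set M := 1%:M + d^-1 *: Kxx; set B : 'M[R]_K := intmx A.
have pdM : posdef M by apply: posdef_add1_psd; rewrite ?invr_ge0 ?ltW.
have Bunit : B \in unitmx.
  by rewrite unitmxE unitfE -sqrf_eq0 gt_eqF // (lt_le_trans ltr01) ?det_intmx_sqr_ge1.
have pdG := posdef_congr Bunit pdM.
have detM_gt0 := det_posdef_gt0 pdM.
set m := \big[Num.max/0]_(k < K) quadrow A M k.
have m_gt0 : 0 < m.
  apply: lt_le_trans (posdef_diag_gt0 (Ordinal K_gt0) pdG) _.
  by rewrite -quadrow_gram /m (bigD1 (Ordinal K_gt0)) //= le_max lexx.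
have detM_le : \det M <= m ^+ K.
  have -> : m = \big[Num.max/0]_k (B *m M *m B^T) k k.
    by apply: eq_bigr => k _; rewrite quadrow_gram.
  apply: le_trans (det_le_max_diagX pdG); rewrite !det_mulmx det_tr mulrAC -expr2.
  by rewrite ler_peMl ?det_intmx_sqr_ge1 ?ltW.
rewrite ger0_norm ?(ltW detM_gt0) // -subr_ge0.
have -> : 1 / 2 * log2 m - 1 / (2 * K%:R) * log2 (\det M)
          = (K%:R * log2 m - log2 (\det M)) / (2 * K%:R).
  by field; rewrite pnatr_eq0 -lt0n.
by rewrite divr_ge0 ?subr_ge0 ?log2_le_mulr // mulr_ge0 ?ler0n.
Qed.
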